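(* Consider noisy group testing under reverse $Z$-channel noise with parameter $\rho\in(0,1)$, $k=\Theta(p^\theta)$ defectives with $\theta\in(0,1)$, and i.i.d. Bernoulli testing with parameter $\nu>0$. Let the COMP decoder output $\hat S$ equal to the set of items that appear in no negative test. Then $P_e\to0$ as $p\to\infty$ whenever $n\ge n_{\rm COMP}(1+\eta)$ for an arbitrarily small fixed $\eta>0$, where $$n_{\rm COMP}=\frac{1}{(1-\rho)\nu e^{-\nu}}\,k\log p.$$
   Context: Setup: $p$ items, unknown defective set $S$ uniform among size-$k$ subsets of $\{1,\dots,p\}$, $p\to\infty$. Test matrix $\mathbf X\in\{0,1\}^{n\times p}$ with i.i.d. Bernoulli$(\nu/k)$ entries ($X_{ij}=1$ iff item $j$ is in test $i$). Noiseless outcome $U_i=\bigvee_{j\in S}X_{ij}$; observed outcome $Y_i$ obtained by passing $U_i$ independently through the reverse $Z$-channel: $P(Y=1|U=0)=\rho$, $P(Y=0|U=0)=1-\rho$, $P(Y=1|U=1)=1$. A test is negative if $Y_i=0$. $P_e=\mathbb P[\hat S\ne S]$. Natural logarithms. *)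

From HB Require Import structures.
From mathcomp Require Import all_boot all_order all_algebra.
From mathcomp Require Import all_classical all_reals all_analysis.
Set Implicit Arguments. Unset Strict Implicit. Unset Printing Implicit Defensive.
Import Order.TTheory GRing.Theory Num.Theory.
Local Open Scope ring_scope.

Section GT.
Variable R : realType.

(* Test matrix: X (i, j) = true iff item j is in test i. *)
Definition tmat (n p : nat) := {ffun 'I_n * 'I_p -> bool}.

Definition noiseless (n p : nat) (S : {set 'I_p}) (X : tmat n p) (i : 'I_n) : bool :=
  [exists j in S, X (i, j)].

Definition comp_decoder (n p : nat) (X : tmat n p) (Y : {ffun 'I_n -> bool})
  : {set 'I_p} :=
  [set j | [forall i : 'I_n, X (i, j) ==> Y i]].

Definition design_prob (n p : nat) (q : R) (X : tmat n p) : R :=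
  \prod_(ij : 'I_n * 'I_p) (if X ij then q else 1 - q).

Definition rz_channel (rho : R) (u y : bool) : R :=
  if u then (if y then 1 else 0) else (if y then rho else 1 - rho).

Definition channel_prob (n p : nat) (rho : R) (S : {set 'I_p}) (X : tmat n p)
  (Y : {ffun 'I_n -> bool}) : R :=
  \prod_(i : 'I_n) rz_channel rho (noiseless S X i) (Y i).

Definition ksubsets (p k : nat) : {set {set 'I_p}} := [set S : {set 'I_p} | #|S| == k].

Definition Pe_COMP (n p k : nat) (nu rho : R) : R :=
  \sum_(S in ksubsets p k) (#|ksubsets p k|%:R)^-1 *
    \sum_(X : tmat n p) design_prob (nu / k%:R) X *
      \sum_(Y : {ffun 'I_n -> bool}) channel_prob rho S X Y *
        (if comp_decoder X Y != S then 1 else 0).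

Definition n_COMP (p k : nat) (nu rho : R) : R :=
  (k%:R * ln (p%:R)) / ((1 - rho) * nu * expR (- nu)).

End GT.

From HB Require Import structures.
From mathcomp Require Import all_boot all_order all_algebra.
From mathcomp Require Import all_classical all_reals all_analysis.
From mathcomp Require Import ring lra.
Import Order.TTheory GRing.Theory Num.Theory numFieldNormedType.Exports.
Local Open Scope classical_set_scope.
Local Open Scope ring_scope.
Set Implicit Arguments. Unset Strict Implicit. Unset Printing Implicit Defensive.

(* The reverse Z-channel never turns a positive test negative, so COMP never
   discards a defective item, and it errs only if some non-defective item j
   survives all n tests.  A test eliminates j exactly when it contains j, no
   defective, and its outcome is not flipped: probability (1 - rho) q (1 - q)^k
   with q = nu/k.  Tests being independent, j survives with probability
   (1 - (1 - rho) q (1 - q)^k)^n, and a union bound over the p items gives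
   P_e <= p exp(-n (1 - rho) q (1 - q)^k).  As (1 - nu/k)^k e^nu -> 1, for
   n >= (1 + eta) n_COMP the exponent exceeds (1 + eta/2) log p, so
   P_e <= p^(-eta/2) -> 0. *)

Section ErrorProbability.
Variable R : realType.

Lemma prod_indicator (I : finType) (P : pred I) :
  (if [forall i, P i] then 1 else 0 : R) = \prod_i (if P i then 1 else 0).
Proof.
case: forallP => [allP|notallP]; first by rewrite big1 // => i _; rewrite allP.
have /forallPn [i notPi] : ~~ [forall i, P i] by apply/forallP.
by rewrite (bigD1 i) //= (negbTE notPi) mul0r.
Qed.

Lemma sum_ffun_pair (I J T : finType) (G : {ffun I * J -> T} -> R) :
  \sum_X G X = \sum_(F : {ffun I -> {ffun J -> T}}) G [ffun ij => F ij.1 ij.2].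
Proof.
rewrite (reindex (fun F : {ffun I -> {ffun J -> T}} => [ffun ij => F ij.1 ij.2])) //.
exists (fun X : {ffun I * J -> T} => [ffun i => [ffun j => X (i, j)]]) => [F _|X _].
  by apply/ffunP => i; apply/ffunP => j; rewrite !ffunE.
by apply/ffunP => -[i j]; rewrite !ffunE.
Qed.

Definition bern (q : R) (b : bool) : R := if b then q else 1 - q.

Lemma bern_ge0 (q : R) b : 0 <= q <= 1 -> 0 <= bern q b.
Proof. by case/andP=> q0 q1; case: b; rewrite /bern ?subr_ge0. Qed.

(* Probability that one test does not eliminate a given non-defective item
   when there are m defectives. *)
Definition keep_prob (q rho : R) (m : nat) : R := 1 - (1 - rho) * (q * (1 - q) ^+ m).

Lemma keep_prob_ge0 (q rho : R) m : 0 <= q <= 1 -> 0 <= rho <= 1 -> 0 <= keep_prob q rho m.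
Proof.
move=> /andP[q0 q1] /andP[rho0 rho1].
rewrite /keep_prob subr_ge0 mulr_ile1 ?subr_ge0 ?gerBl ?mulr_ge0 ?exprn_ge0 ?subr_ge0 //.
by rewrite mulr_ile1 ?exprn_ge0 ?exprn_ile1 ?subr_ge0 ?gerBl.
Qed.

Lemma sum_prod_bern (I : finType) (q : R) :
  \sum_(r : {ffun I -> bool}) \prod_i bern q (r i) = 1.
Proof.
rewrite -(bigA_distr_bigA (fun _ => bern q)) /=.
by rewrite big1 // => i _; rewrite big_bool /bern /=; ring.
Qed.

Section Isolating.
Variables (I : finType) (q : R) (S : {set I}) (j0 : I).
Hypothesis j0S : j0 \notin S.

Lemma sum_prod_bern_isolating :
  \sum_(r : {ffun I -> bool}) (\prod_j bern q (r j)) *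
     (if r j0 && ~~ [exists j in S, r j] then 1 else 0)
  = q * (1 - q) ^+ #|S|.
Proof.
pose allowed j (b : bool) := if j == j0 then b else (j \notin S) || ~~ b.
have isolatingE r : r j0 && ~~ [exists j in S, r j] = [forall j, allowed j (r j)].
  apply/andP/forallP => [[rj0 /existsPn noS] j|allw].
    by rewrite /allowed; case: eqP => [->//|_]; have := noS j; case: (j \in S).
  split; first by have := allw j0; rewrite /allowed eqxx.
  apply/existsPn => j; have := allw j; rewrite /allowed.
  by case: eqP => [->|_]; [rewrite (negbTE j0S)|case: (j \in S)].
under eq_bigr => r _ do rewrite isolatingE prod_indicator -big_split /=.
rewrite -(bigA_distr_bigA (fun j b => bern q b * (if allowed j b then 1 else 0))) /=.
rewrite (bigD1 j0) //= big_bool /allowed eqxx /bern /= mulr1 mulr0 addr0.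
congr (_ * _); transitivity (\prod_(j | j != j0) (if j \in S then 1 - q else 1)).
  by apply: eq_bigr => j jj0; rewrite big_bool (negbTE jj0); case: (j \in S) => /=; ring.
rewrite -big_mkcondr prodr_const; congr (_ ^+ _); apply: eq_card => j.
rewrite unfold_in /=; case: eqP => [->|//]; exact/esym/negbTE.
Qed.

Lemma sum_prod_bern_keep (rho : R) :
  \sum_(r : {ffun I -> bool}) (\prod_j bern q (r j)) *
     (if r j0 && ~~ [exists j in S, r j] then rho else 1)
  = keep_prob q rho #|S|.
Proof.
rewrite /keep_prob -sum_prod_bern_isolating -[X in _ = X - _](sum_prod_bern I q).
rewrite mulr_sumr -sumrB.
by apply: eq_bigr => r _; case: ifP => _; ring.
Qed.

End Isolating.

Section GroupTesting.
Variables (n p : nat) (q rho : R) (S : {set 'I_p}).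

(* [Pe_COMP] is by definition the average of [gt_prob (fun X Y => comp_decoder X Y != S)]
   over the k-subsets [S]. *)
Definition gt_prob (E : tmat n p -> {ffun 'I_n -> bool} -> bool) : R :=
  \sum_(X : tmat n p) design_prob q X *
    \sum_(Y : {ffun 'I_n -> bool}) channel_prob rho S X Y * (if E X Y then 1 else 0).

Lemma sum_channel_comp_mem (X : tmat n p) j0 :
  \sum_(Y : {ffun 'I_n -> bool}) channel_prob rho S X Y *
     (if j0 \in comp_decoder X Y then 1 else 0)
  = \prod_i (if X (i, j0) && ~~ noiseless S X i then rho else 1).
Proof.
transitivity (\sum_(Y : {ffun 'I_n -> bool}) \prod_i
  (rz_channel rho (noiseless S X i) (Y i) * (if X (i, j0) ==> Y i then 1 else 0))).
  by apply: eq_bigr => Y _; rewrite big_split /= inE prod_indicator.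
rewrite -(bigA_distr_bigA (fun i y =>
  rz_channel rho (noiseless S X i) y * (if X (i, j0) ==> y then 1 else 0))) /=.
apply: eq_bigr => i _; rewrite big_bool /rz_channel.
by case: (noiseless S X i); case: (X (i, j0)) => /=; ring.
Qed.

Lemma gt_prob_comp_mem j0 : j0 \notin S ->
  gt_prob (fun X Y => j0 \in comp_decoder X Y) = keep_prob q rho #|S| ^+ n.
Proof.
move=> j0S; rewrite /gt_prob sum_ffun_pair.
transitivity (\sum_(F : {ffun 'I_n -> {ffun 'I_p -> bool}}) \prod_i
  ((\prod_j bern q (F i j)) * (if F i j0 && ~~ [exists j in S, F i j] then rho else 1))).
  apply: eq_bigr => F _; rewrite sum_channel_comp_mem big_split /=; congr (_ * _).
    by rewrite /design_prob pair_big /=; apply: eq_bigr => -[i j] _; rewrite ffunE.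
  apply: eq_bigr => i _; rewrite /noiseless ffunE /=.
  by under eq_existsb => j do rewrite ffunE.
rewrite -(bigA_distr_bigA (fun i (r : {ffun 'I_p -> bool}) =>
  (\prod_j bern q (r j)) * (if r j0 && ~~ [exists j in S, r j] then rho else 1))) /=.
by under eq_bigr => i _ do rewrite sum_prod_bern_keep //; rewrite prodr_const card_ord.
Qed.

Lemma defectives_sub_comp (X : tmat n p) Y :
  channel_prob rho S X Y != 0 -> S \subset comp_decoder X Y.
Proof.
move=> chXY; apply/fintype.subsetP => j jS.
rewrite inE; apply/forallP => i; apply/implyP => Xij.
apply: contraR chXY => nYi; rewrite /channel_prob (bigD1 i) //= /rz_channel.
have -> : noiseless S X i by apply/existsP; exists j; rewrite jS Xij.
by rewrite (negbTE nYi) mul0r.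
Qed.

Hypotheses (q01 : 0 <= q <= 1) (rho01 : 0 <= rho <= 1).

Lemma design_prob_ge0 (X : tmat n p) : 0 <= design_prob q X.
Proof. by apply: prodr_ge0 => ij _; exact: (bern_ge0 (X ij) q01). Qed.

Lemma channel_prob_ge0 (X : tmat n p) Y : 0 <= channel_prob rho S X Y.
Proof.
case/andP: rho01 => rho0 rho1; apply: prodr_ge0 => i _; rewrite /rz_channel.
by case: (noiseless S X i); case: (Y i); rewrite ?subr_ge0.
Qed.

Lemma gt_prob_ge0 E : 0 <= gt_prob E.
Proof.
apply: sumr_ge0 => X _; apply: mulr_ge0; first exact: design_prob_ge0.
by apply: sumr_ge0 => Y _; apply: mulr_ge0; [exact: channel_prob_ge0|case: ifP].
Qed.

Lemma gt_prob_union_bound (J : finType) (A : {pred J})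
    (E : tmat n p -> {ffun 'I_n -> bool} -> bool) F :
  (forall X Y, channel_prob rho S X Y != 0 -> E X Y -> [exists j in A, F j X Y]) ->
  gt_prob E <= \sum_(j in A) gt_prob (F j).
Proof.
move=> EF; rewrite /gt_prob exchange_big /=; apply: ler_sum => X _.
rewrite -mulr_sumr; apply: ler_wpM2l; first exact: design_prob_ge0.
rewrite exchange_big /=; apply: ler_sum => Y _; rewrite -mulr_sumr.
have [->|chXY] := eqVneq (channel_prob rho S X Y) 0; first by rewrite !mul0r.
apply: ler_wpM2l; first exact: channel_prob_ge0.
have sum_ge0 : 0 <= \sum_(j in A) (if F j X Y then 1 else 0 : R).
  by apply: sumr_ge0 => j _; case: ifP.
case: ifP => // /(EF _ _ chXY)/existsP[j /andP[jA Fj]].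
by rewrite (bigD1 j) //= Fj lerDl; apply: sumr_ge0 => i _; case: ifP.
Qed.

Lemma gt_prob_comp_error_le :
  gt_prob (fun X Y => comp_decoder X Y != S) <= p%:R * keep_prob q rho #|S| ^+ n.
Proof.
apply: le_trans (gt_prob_union_bound (A := ~: S)
  (F := fun j X Y => j \in comp_decoder X Y) _) _.
  move=> X Y /defectives_sub_comp sub neq; apply/existsP.
  have /fintype.subsetPn[j jC jS] : ~~ (comp_decoder X Y \subset S).
    by apply: contra neq => sub'; rewrite finset.eqEsubset sub' sub.
  by exists j; rewrite inE jS jC.
rewrite (eq_bigr (fun=> keep_prob q rho #|S| ^+ n)); last first.
  by move=> j; rewrite inE => jS; rewrite gt_prob_comp_mem.
rewrite sumr_const -[_ *+ #|_|]mulr_natl.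
apply: ler_wpM2r; first exact/exprn_ge0/keep_prob_ge0.
by rewrite ler_nat -[p in (_ <= p)%N]card_ord max_card.
Qed.

End GroupTesting.

Lemma sum_uniform_le (T : finType) (A : {pred T}) (f : T -> R) (B : R) :
  0 <= B -> {in A, forall x, f x <= B} -> \sum_(x in A) #|A|%:R^-1 * f x <= B.
Proof.
move=> B0 fB; rewrite -mulr_sumr; have [->|Apos] := posnP #|A|.
  by rewrite invr0 mul0r.
rewrite mulrC ler_pdivrMr ?ltr0n // mulr_natr -sumr_const.
exact: ler_sum.
Qed.

Lemma Pe_COMP_ge0 n p k (nu rho : R) : 0 <= nu / k%:R <= 1 -> 0 <= rho <= 1 ->
  0 <= Pe_COMP n p k nu rho.
Proof.
move=> q01 rho01; apply: sumr_ge0 => S _.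
by apply: mulr_ge0; [rewrite invr_ge0|exact: gt_prob_ge0].
Qed.

Lemma Pe_COMP_le n p k (nu rho : R) : 0 <= nu / k%:R <= 1 -> 0 <= rho <= 1 ->
  Pe_COMP n p k nu rho <= p%:R * keep_prob (nu / k%:R) rho k ^+ n.
Proof.
move=> q01 rho01; apply: sum_uniform_le => [|S].
  by rewrite mulr_ge0 ?exprn_ge0 ?keep_prob_ge0.
rewrite inE => /eqP kS; move: q01; rewrite -kS => q01.
exact: gt_prob_comp_error_le.
Qed.

End ErrorProbability.

Section Asymptotics.
Variable R : realType.

Lemma expR_Ndiv_le_1B (x : R) : 0 <= x < 1 -> expR (- (x / (1 - x))) <= 1 - x.
Proof.
case/andP=> x0 x1; have x1' : 0 < 1 - x by rewrite subr_gt0.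
have : 1 + x / (1 - x) <= expR (x / (1 - x)) by exact: expR_ge1Dx.
have -> : 1 + x / (1 - x) = (1 - x)^-1 by field; rewrite gt_eqF.
by rewrite expRN -[X in _ <= X]invrK lef_pV2 ?posrE ?invr_gt0 ?expR_gt0.
Qed.

Lemma exprn_1B_le_expR (x : R) N : x <= 1 -> (1 - x) ^+ N <= expR (- (x * N%:R)).
Proof.
move=> x1; rewrite -mulNr expRM_natr; apply: lerXn2r; rewrite ?nnegrE ?expR_ge0 ?subr_ge0 //.
exact: expR_ge1Dx.
Qed.

Lemma exprn_1Bdiv_expR_ge (nu delta : R) (K : nat) : 0 < nu -> 0 < delta ->
  nu + nu ^+ 2 / delta + 1 <= K%:R -> 1 - delta <= (1 - nu / K%:R) ^+ K * expR nu.
Proof.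
move=> nu0 delta0 K_ge.
have sq_ge0 : 0 <= nu ^+ 2 / delta by rewrite divr_ge0 ?sqr_ge0 ?ltW.
have K0 : 0 < K%:R :> R by lra.
have Knu : 0 < K%:R - nu by lra.
have q01 : 0 <= nu / K%:R < 1 by rewrite divr_ge0 ?ltW //= ltr_pdivrMr //; lra.
have powK_ge : expR (- (nu / (K%:R - nu))) ^+ K <= (1 - nu / K%:R) ^+ K.
  apply: lerXn2r; rewrite ?nnegrE ?expR_ge0 //.
    by case/andP: q01 => _ /ltW; rewrite subr_ge0.
  have -> : nu / (K%:R - nu) = nu / K%:R / (1 - nu / K%:R) by field; rewrite !gt_eqF.
  exact: expR_Ndiv_le_1B.
apply: le_trans (ler_wpM2r (expR_ge0 _) powK_ge).
rewrite -expRM_natr -expRD.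
have -> : - (nu / (K%:R - nu)) * K%:R + nu = - (nu ^+ 2 / (K%:R - nu)).
  by field; rewrite !gt_eqF.
apply: le_trans (expR_ge1Dx _); rewrite lerD2l lerN2 ler_pdivrMr //.
have : nu ^+ 2 / delta <= K%:R - nu - 1 by lra.
rewrite ler_pdivrMr //; nra.
Qed.

Lemma elim_prob_mul_n_COMP (p K : nat) (nu rho : R) : 0 < nu -> rho < 1 -> (0 < K)%N ->
  (1 - rho) * (nu / K%:R * (1 - nu / K%:R) ^+ K) * n_COMP p K nu rho
  = ln p%:R * ((1 - nu / K%:R) ^+ K * expR nu).
Proof.
move=> nu0 rho1 K0; rewrite /n_COMP expRN; field.
by rewrite !gt_eqF ?expR_gt0 ?ltr0n ?subr_gt0.
Qed.

Lemma union_bound_le_expR (nu rho eta : R) (p K N : nat) :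
  0 < nu -> 0 <= rho < 1 -> 0 < eta -> (0 < p)%N ->
  nu + nu ^+ 2 / (eta / (2 * (1 + eta))) + 1 <= K%:R ->
  (1 + eta) * n_COMP p K nu rho <= N%:R ->
  p%:R * keep_prob (nu / K%:R) rho K ^+ N <= expR (- (eta / 2 * ln p%:R)).
Proof.
move=> nu0 /andP[rho0 rho1] eta0 p0 K_ge N_ge.
(* delta is chosen so that (1 + eta) (1 - delta) = 1 + eta / 2. *)
set delta := eta / (2 * (1 + eta)) in K_ge.
have delta0 : 0 < delta by rewrite divr_gt0 //; lra.
have sq_ge0 : 0 <= nu ^+ 2 / delta by rewrite divr_ge0 ?sqr_ge0 ?ltW.
have K0 : 0 < K%:R :> R by lra.
have q01 : 0 <= nu / K%:R <= 1.
  by rewrite divr_ge0 ?(ltW nu0) ?(ltW K0) //= ler_pdivrMr //; lra.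
rewrite /keep_prob; set a := (1 - rho) * _.
have a_ge0 : 0 <= a.
  by case/andP: q01 => q0 q1; rewrite !mulr_ge0 ?exprn_ge0 ?subr_ge0 // ltW.
have a_le1 : a <= 1.
  by rewrite -subr_ge0; apply: keep_prob_ge0; rewrite // rho0 ltW.
have lnp_ge0 : 0 <= ln p%:R :> R by rewrite ln_ge0 // ler1n.
have elimN : (1 + eta / 2) * ln p%:R <= a * N%:R.
  apply: le_trans (ler_wpM2l a_ge0 N_ge).
  rewrite mulrCA elim_prob_mul_n_COMP //; last by rewrite -(ltr0n R).
  have -> : 1 + eta / 2 = (1 + eta) * (1 - delta) by rewrite /delta; field; lra.
  rewrite -mulrA; apply: ler_wpM2l; first by rewrite addr_ge0 // ltW.
  by rewrite mulrC; apply: ler_wpM2l => //; exact: exprn_1Bdiv_expR_ge.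
apply: le_trans (ler_wpM2l (ler0n R p) (exprn_1B_le_expR N a_le1)) _.
by rewrite -{1}(lnK (_ : 0 < p%:R)) ?ltr0n // -expRD ler_expR; lra.
Qed.

Lemma ln_natr_cvgy : ln (p%:R : R) @[p --> \oo] --> +oo.
Proof.
apply/cvgryPge => L; exists (Num.truncn (expR L)).+1 => // p /= p_ge.
have eL_lt : expR L < p%:R by apply: lt_le_trans (truncnS_gt _) _; rewrite ler_nat.
by rewrite -ler_expR lnK ?posrE ?(lt_trans (expR_gt0 L)) // ltW.
Qed.

Lemma powR_natr_cvgy (theta : R) : 0 < theta -> p%:R `^ theta @[p --> \oo] --> +oo.
Proof.
move=> theta0; apply/cvgryPge => A; near=> p.
have p0 : (0 < p)%N by near: p; exists 1%N.
have lnp : (A - 1) / theta <= ln p%:R.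
  by near: p; exact: ((cvgryPge _).1 ln_natr_cvgy ((A - 1) / theta)).
rewrite /powR gt_eqF ?ltr0n //; apply: le_trans (expR_ge1Dx _).
move: lnp; rewrite ler_pdivrMr //; lra.
Unshelve. all: by end_near.
Qed.

Lemma powR_le_natr_cvgy (c theta : R) (k : nat -> nat) : 0 < c -> 0 < theta ->
  (\forall p \near \oo, c * p%:R `^ theta <= (k p)%:R) ->
  ((k p)%:R : R) @[p --> \oo] --> +oo.
Proof.
move=> c0 theta0 k_ge; apply/cvgryPge => A.
apply: filterS2 k_ge ((cvgryPge _).1 (powR_natr_cvgy theta0) (A / c)) => p ck.
by rewrite ler_pdivrMr // mulrC => /le_trans; apply.
Qed.

Lemma expR_Nln_natr_cvg0 (c : R) : 0 < c -> expR (- (c * ln p%:R)) @[p --> \oo] --> 0.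
Proof.
move=> c0; have c_ln : c * ln p%:R @[p --> \oo] --> +oo.
  apply/cvgryPge => A; apply: filterS ((cvgryPge _).1 ln_natr_cvgy (A / c)) => p.
  by rewrite ler_pdivrMr // mulrC.
rewrite (_ : (fun p => _) = (fun x => expR (- x)) \o (fun p : nat => c * ln p%:R)) //.
by apply: (@cvg_comp _ _ _ _ _ _ (pinfty_nbhs R)); last exact: cvgr_expR.
Qed.

End Asymptotics.

Theorem lemma1 (R : realType) (rho nu theta eta : R)
  (k n : nat -> nat)
  (hrho0 : 0 < rho) (hrho1 : rho < 1)
  (htheta0 : 0 < theta) (htheta1 : theta < 1)
  (hnu : 0 < nu) (heta : 0 < eta)
  (hk : exists c1 c2 : R, 0 < c1 /\ 0 < c2 /\
          exists p0 : nat, forall p : nat, (p0 <= p)%N ->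
            c1 * (p%:R `^ theta) <= (k p)%:R /\ (k p)%:R <= c2 * (p%:R `^ theta))
  (hn : exists p0 : nat, forall p : nat, (p0 <= p)%N ->
          (1 + eta) * n_COMP p (k p) nu rho <= (n p)%:R) :
  (fun p : nat => Pe_COMP (n p) p (k p) nu rho) @ \oo --> (0 : R).
Proof.
have [c1 [c2 [c1_gt0 [_ [p0 k_ge]]]]] := hk.
have [p1 n_ge] := hn.
have k_cvgy : ((k p)%:R : R) @[p --> \oo] --> +oo.
  by apply: (powR_le_natr_cvgy c1_gt0 htheta0); exists p0 => // p /= /k_ge[].
set T := nu + nu ^+ 2 / (eta / (2 * (1 + eta))) + 1.
have nu_lt_T : nu < T.
  have delta_gt0 : 0 < eta / (2 * (1 + eta)) by rewrite divr_gt0 //; lra.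
  by rewrite /T; have := divr_ge0 (sqr_ge0 nu) (ltW delta_gt0); lra.
have rho_lt1 : 0 <= rho < 1 by rewrite ltW.
have rho_le1 : 0 <= rho <= 1 by rewrite !ltW.
apply: (squeeze_cvgr _ (cvg_cst 0) (expR_Nln_natr_cvg0 (_ : 0 < eta / 2))); last lra.
near=> p.
have kT : T <= (k p)%:R by near: p; exact: ((cvgryPge _).1 k_cvgy T).
have q01 : 0 <= nu / (k p)%:R <= 1.
  have nu_lt_k := lt_le_trans nu_lt_T kT.
  by rewrite divr_ge0 ?(ltW hnu) //= ler_pdivrMr ?mul1r ?ltW // (lt_trans hnu).
rewrite Pe_COMP_ge0 //=.
apply: le_trans (Pe_COMP_le _ _ q01 rho_le1) (union_bound_le_expR hnu rho_lt1 heta _ kT _).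
- by near: p; exists 1%N.
- by apply: n_ge; near: p; exists p1.
Unshelve. all: by end_near.
Qed.
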